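(* Let $n=2$, $m=1$, $v_1(x)=x$ and $v_2(x)=\sqrt{2x}$ for $x\ge0$. Then for every $\rho\in(0,1)$ there exist no allocation $\mathbf{x}\in\Psi(\rho)$ and pricing rule $p:\mathbb{R}_{\ge0}\to\mathbb{R}_{\ge0}$ such that $(\mathbf{x},p)$ is a Walrasian equilibrium.
   Context: Single good of supply 1; an allocation is $(x_1,x_2)\in\mathbb{R}^2_{\ge0}$ with $x_1+x_2\le1$. $\Psi(\rho)$ is the set of allocations maximizing $(v_1(x_1)^\rho+v_2(x_2)^\rho)^{1/\rho}$. Quasilinear demand set $D_i(p)=\arg\max_{y\ge0}(v_i(y)-p(y))$. $(\mathbf{x},p)$ is a Walrasian equilibrium if $x_i\in D_i(p)$ for $i=1,2$, $x_1+x_2\le1$, and $x_1+x_2=1$ if the good has nonzero cost (some $y$ has $p(y)>0$). *)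

From HB Require Import structures.
From mathcomp Require Import all_boot all_order all_algebra.
From mathcomp Require Import all_classical all_reals exp.
Set Implicit Arguments. Unset Strict Implicit. Unset Printing Implicit Defensive.
Import Order.TTheory GRing.Theory Num.Theory.
Local Open Scope ring_scope.

Section Market.
Variable R : realType.

Definition allocation (x1 x2 : R) : Prop := 0 <= x1 /\ 0 <= x2 /\ x1 + x2 <= 1.

Definition rho_welfare (v1 v2 : R -> R) (rho x1 x2 : R) : R :=
  powR (powR (v1 x1) rho + powR (v2 x2) rho) (rho^-1).

Definition Psi (v1 v2 : R -> R) (rho x1 x2 : R) : Prop :=
  allocation x1 x2 /\
  forall y1 y2, allocation y1 y2 ->
    rho_welfare v1 v2 rho y1 y2 <= rho_welfare v1 v2 rho x1 x2.

Definition in_demand (v p : R -> R) (y : R) : Prop :=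
  0 <= y /\ forall z, 0 <= z -> v z - p z <= v y - p y.

(* pricing rule p : R_{>=0} -> R_{>=0} (values off the domain are irrelevant) *)
Definition pricing_rule (p : R -> R) : Prop := forall y, 0 <= y -> 0 <= p y.

Definition walrasian (v1 v2 p : R -> R) (x1 x2 : R) : Prop :=
  in_demand v1 p x1 /\ in_demand v2 p x2 /\ x1 + x2 <= 1 /\
  ((exists y, 0 <= y /\ 0 < p y) -> x1 + x2 = 1).

Definition v_one (x : R) : R := x.
Definition v_two (x : R) : R := Num.sqrt (2 * x).

End Market.

From HB Require Import structures.
From mathcomp Require Import all_boot all_order all_algebra.
From mathcomp Require Import all_classical all_reals exp.
From mathcomp Require Import ring lra.
Import Order.TTheory GRing.Theory Num.Theory.
Local Open Scope ring_scope.

(* Suppose (x1, x2) is rho-optimal and supported at equilibrium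
   by a nonnegative pricing rule p.
   - Agent 1's valuation is unbounded increasing, so demand forces p(x1+1) > 0:
     the good has nonzero cost, hence x1 + x2 = 1.
   - Each agent weakly prefers its own bundle (no envy), which gives
     x2 - x1 <= sqrt(2 x2) - sqrt(2 x1); together with x1 + x2 = 1 this forces
     b := sqrt(2 x2) >= 1, i.e. agent 2 gets at least half of the good.
   - Concavity of t |-> t^rho, in the derivative-free form of tangent-line
     bounds (from Young's inequality), shows that moving the good towards
     agent 1, to the allocation (1 - c^2/2, c^2/2) with c = 1 - (1-rho)/10,
     strictly increases x1^rho + v2(x2)^rho, contradicting optimality. *)

(* In equilibrium nobody envies the other: the difference of valuations
   between the two bundles is ordered by the common price difference. *)
Lemma demand_no_envy {R : realType} {v1 v2 p : R -> R} {x1 x2 : R} :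
  in_demand v1 p x1 -> in_demand v2 p x2 -> v1 x2 - v1 x1 <= v2 x2 - v2 x1.
Proof.
move=> [x1_ge0 D1] [x2_ge0 D2].
have := D1 x2 x2_ge0; have := D2 x1 x1_ge0; lra.
Qed.

Lemma demand_positive_price {R : realType} {v p : R -> R} {x : R} :
  pricing_rule p -> in_demand v p x -> v x < v (x + 1) ->
  exists y, 0 <= y /\ 0 < p y.
Proof.
move=> p_ge0 [x_ge0 Dx] gain; exists (x + 1); split; first lra.
have := Dx (x + 1) ltac:(lra); have := p_ge0 x x_ge0; lra.
Qed.

(* With a^2 + b^2 = 2, the function s |-> s - s^2/2 (increasing on [0,1])
   cannot be larger at b < 1 than at a > 1; hence no envy forces b >= 1. *)
Lemma no_envy_large_share {R : realFieldType} {a b : R} :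
  0 <= a -> 0 <= b -> a ^+ 2 + b ^+ 2 = 2 ->
  a - a ^+ 2 / 2 <= b - b ^+ 2 / 2 -> 1 <= b.
Proof.
move=> a_ge0 b_ge0 sum_sq envy; rewrite leNgt; apply/negP => b_lt1.
have b_sq : b ^+ 2 < 1 by rewrite expr2; nra.
have a_gt1 : 1 < a by rewrite ltNge; apply/negP => a_le1; nra.
have : (b - a) * (2 - (a + b)) >= 0 by nra.
have : (a - b) ^+ 2 > 0 by apply: exprn_gt0; lra.
nra.
Qed.

(* Bernoulli's inequality for exponents in (0,1), from Young's inequality. *)
Lemma powR_le_affine (R : realType) (r t : R) : 0 < r -> r < 1 -> 0 <= t ->
  powR t r <= r * t + (1 - r).
Proof.
move=> r_gt0 r_lt1 t_ge0.
have inv_r : 0 < r^-1 by rewrite invr_gt0.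
have inv_1r : 0 < (1 - r)^-1 by rewrite invr_gt0 subr_gt0.
have := @conjugate_powR R (powR t r) 1 r^-1 (1 - r)^-1
  (powR_ge0 _ _) ler01 inv_r inv_1r.
rewrite !invrK -powRrM mulfV ?gt_eqF // powRr1 // powR1 mulr1 => young.
by have := young ltac:(lra); lra.
Qed.

Lemma powR_tangent (R : realType) (r u c : R) : 0 < r -> r < 1 -> 0 <= u ->
  0 < c -> powR u r <= powR c r * (r * (u / c) + (1 - r)).
Proof.
move=> r_gt0 r_lt1 u_ge0 c_gt0.
have uc_ge0 : 0 <= u / c by rewrite divr_ge0 // ltW.
have {1}-> : u = c * (u / c) by rewrite mulrCA mulfV ?gt_eqF // mulr1.
rewrite powRM //; last exact: ltW.
by rewrite ler_wpM2l ?powR_ge0 // powR_le_affine.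
Qed.

(* Tangent-line bounds at y1 for
   P ~ x1^r and at c for Q ~ b^r, together with B/c^2 < A/y1 (agent 1's
   marginal welfare at y1 exceeds agent 2's at c, measured per unit of good),
   show that moving the good from (x1, b^2/2) to (y1, c^2/2), with c < b,
   strictly increases the sum. *)
Lemma tangent_bounds_improve {R : realFieldType} {r x1 y1 b c P Q A B : R} :
  0 < r -> 0 < y1 -> 0 < c -> c < b -> 0 <= B ->
  x1 + b ^+ 2 / 2 = y1 + c ^+ 2 / 2 ->
  P <= A * (r * (x1 / y1) + (1 - r)) -> Q <= B * (r * (b / c) + (1 - r)) ->
  B * y1 < A * c ^+ 2 -> P + Q < A + B.
Proof.
move=> r_gt0 y1_gt0 c_gt0 c_lt_b B_ge0 budget P_le Q_le marginal.
pose d := y1 - x1; pose u := A / y1; pose w := B / c ^+ 2.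
have c2_gt0 : 0 < c ^+ 2 by rewrite exprn_gt0.
have d_def : d = (b ^+ 2 - c ^+ 2) / 2 by rewrite /d; lra.
have d_gt0 : 0 < d.
  have : c ^+ 2 < b ^+ 2 by rewrite !expr2; nra.
  by rewrite d_def; lra.
have w_lt_u : w < u.
  rewrite -subr_gt0 (_ : u - w = (A * c ^+ 2 - B * y1) / (y1 * c ^+ 2)).
    by rewrite divr_gt0 ?mulr_gt0 // subr_gt0.
  by rewrite /u /w; field; rewrite !gt_eqF.
(* secant slope of b |-> b at c vs. of b |-> b^2/2: (b - c)/c <= d/c^2 *)
have slope : b / c - 1 <= d / c ^+ 2.
  rewrite -subr_ge0 (_ : d / c ^+ 2 - (b / c - 1) = (b - c) ^+ 2 / (2 * c ^+ 2)).
    by rewrite divr_ge0 ?sqr_ge0 ?mulr_ge0 // ltW.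
  by rewrite d_def; field; rewrite gt_eqF.
have P_le' : P <= A - r * u * d.
  by rewrite (_ : A - r * u * d = A * (r * (x1 / y1) + (1 - r))) //;
     rewrite /u /d; field; rewrite gt_eqF.
have Q_le' : Q <= B + r * w * d.
  have : B * (r * (b / c) + (1 - r)) = B + r * B * (b / c - 1) by ring.
  have : r * B * (b / c - 1) <= r * B * (d / c ^+ 2).
    by rewrite ler_wpM2l // mulr_ge0 // ltW.
  by rewrite /w mulrA; lra.
have : 0 < r * d * (u - w).
  by apply: mulr_gt0; [exact: mulr_gt0 | rewrite subr_gt0].
lra.
Qed.

(* Strict improvement of the power sum x1^r + b^r: instantiates the algebraic
   core with the three tangent-line bounds of t |-> t^r (at y1 for x1 and for
   c, at c for b); the hypothesis r c + (1-r) y1 < c^2 turns the bound on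
   c^r into the marginal comparison c^r / c^2 < y1^r / y1. *)
Lemma powR_sum_improvement (R : realType) (r x1 y1 b c : R) :
  0 < r -> r < 1 -> 0 <= x1 -> 0 < y1 -> 0 < c -> c < b ->
  x1 + b ^+ 2 / 2 = y1 + c ^+ 2 / 2 -> r * c + (1 - r) * y1 < c ^+ 2 ->
  powR x1 r + powR b r < powR y1 r + powR c r.
Proof.
move=> r_gt0 r_lt1 x1_ge0 y1_gt0 c_gt0 c_lt_b budget steep.
have A_gt0 : 0 < powR y1 r by rewrite powR_gt0.
apply: (tangent_bounds_improve r_gt0 y1_gt0 c_gt0 c_lt_b _ budget).
- exact: powR_ge0.
- exact: powR_tangent.
- by apply: powR_tangent => //; lra.
- have B_le : powR c r <= powR y1 r * (r * (c / y1) + (1 - r)).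
    by apply: powR_tangent => //; exact: ltW.
  have -> : powR y1 r * c ^+ 2 = powR y1 r * (r * (c / y1) + (1 - r)) * y1
             + powR y1 r * (c ^+ 2 - (r * c + (1 - r) * y1)).
    by field; rewrite gt_eqF.
  have : 0 < powR y1 r * (c ^+ 2 - (r * c + (1 - r) * y1)).
    by rewrite mulr_gt0 // subr_gt0.
  by have := ler_wpM2r (ltW y1_gt0) B_le; lra.
Qed.

(* For every r in (0,1) the point c = 1 - (1-r)/10 satisfies the steepness
   condition of the previous lemma with y1 = 1 - c^2/2 (at c = 1 it holds
   with slack (1-r)/2). *)
Lemma steep_point {R : realFieldType} {r : R} : 0 < r -> r < 1 ->
  exists c, [/\ 0 < c, c < 1 & r * c + (1 - r) * (1 - c ^+ 2 / 2) < c ^+ 2].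
Proof.
move=> r_gt0 r_lt1; exists (1 - (1 - r) / 10); split; [lra | lra |].
rewrite -subr_gt0 (_ : _ - _ = (1 - r) * (40 - 19 * (1 - r) + (1 - r) ^+ 2 / 2) / 100).
  by rewrite divr_gt0 // mulr_gt0 ?subr_gt0 //; rewrite expr2; nra.
by field.
Qed.

Lemma rho_welfare_lt (R : realType) (v1 v2 : R -> R) (rho x1 x2 y1 y2 : R) :
  0 < rho ->
  powR (v1 x1) rho + powR (v2 x2) rho < powR (v1 y1) rho + powR (v2 y2) rho ->
  rho_welfare v1 v2 rho x1 x2 < rho_welfare v1 v2 rho y1 y2.
Proof.
move=> rho_gt0 sum_lt; apply: gt0_ltr_powR => //; first by rewrite invr_gt0.
- by rewrite nnegrE addr_ge0 ?powR_ge0.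
- by rewrite nnegrE addr_ge0 ?powR_ge0.
Qed.

Lemma half_square_allocation {R : realType} {c : R} : 0 < c -> c < 1 ->
  allocation (1 - c ^+ 2 / 2) (c ^+ 2 / 2) /\ 0 < 1 - c ^+ 2 / 2.
Proof.
move=> c_gt0 c_lt1; have c_sq : c ^+ 2 < 1 by rewrite exprn_ilt1 // ltW.
have c_sq_ge0 : 0 <= c ^+ 2 by rewrite sqr_ge0.
by split; [split; [|split] |]; lra.
Qed.

Lemma v_two_half_sq (R : realType) (c : R) : 0 <= c -> v_two (c ^+ 2 / 2) = c.
Proof. by move=> c_ge0; rewrite /v_two mulrC divfK ?sqrtr_sqr ?ger0_norm ?pnatr_eq0. Qed.

Theorem mainTheorem12 (R : realType) (rho : R) :
  0 < rho -> rho < 1 ->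
  ~ (exists (x1 x2 : R) (p : R -> R),
       Psi (@v_one R) (@v_two R) rho x1 x2 /\ pricing_rule p /\
       walrasian (@v_one R) (@v_two R) p x1 x2).
Proof.
move=> rho_gt0 rho_lt1.
move=> [x1 [x2 [p [[[x1_ge0 [x2_ge0 _]] optimal] [p_ge0 [D1 [D2 [_ clears]]]]]]]].
have full : x1 + x2 = 1.
  by apply: clears; apply: (demand_positive_price p_ge0 D1); rewrite /v_one; lra.
have envy := demand_no_envy D1 D2; rewrite /v_one /v_two in envy.
have a_sq : Num.sqrt (2 * x1) ^+ 2 = 2 * x1 by rewrite sqr_sqrtr // mulr_ge0.
have b_sq : Num.sqrt (2 * x2) ^+ 2 = 2 * x2 by rewrite sqr_sqrtr // mulr_ge0.
have b_ge1 : 1 <= Num.sqrt (2 * x2).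
  apply: (no_envy_large_share (sqrtr_ge0 (2 * x1))); rewrite ?sqrtr_ge0 //.
  - by rewrite a_sq b_sq; lra.
  - by rewrite a_sq b_sq; lra.
have [c [c_gt0 c_lt1 steep]] := steep_point rho_gt0 rho_lt1.
have [alloc_y y1_gt0] := half_square_allocation c_gt0 c_lt1.
move: (optimal _ _ alloc_y); apply/negP; rewrite -ltNge.
apply: rho_welfare_lt => //; rewrite /v_one v_two_half_sq; last exact: ltW.
apply: powR_sum_improvement => //; first exact: (lt_le_trans c_lt1).
by rewrite /v_two b_sq; lra.
Qed.
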